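(* There is an algorithm which, given a rigid $321$-avoiding permutation $\pi$ of size $k$ and a $321$-avoiding permutation $\tau$ of size $n$, outputs an embedding of $\pi$ into $\tau$ (namely the minimum embedding with respect to the pointwise order on rigid mappings) if one exists and reports failure otherwise, and whose running time is $O(kn)$.
   Context: Permutations are identified with their sets of points $(i,\sigma(i))$; an embedding of $\pi$ into $\tau$ is an injective map between point sets preserving the relative horizontal and vertical order of every pair. In a $321$-avoiding permutation $\sigma$, $x$ is an upper element if some point lies to its right and below it, a lower element if some point lies to its left and above it; $U_\sigma$ and $L_\sigma$ denote these sets; $\sigma$ is rigid if every element is upper or lower. On $U_\sigma$ and on $L_\sigma$ the linear order is $x\le y$ iff $x=y$ or $y$ is above and right of $x$. Rigid mappings $f:\pi\to\tau$ (with $f(U_\pi)\subseteq U_\tau$, $f(L_\pi)\subseteq L_\tau$) are ordered pointwise; when $\tau$ contains $\pi$, the set of embeddings of a rigid $\pi$ into $\tau$ has a least element under this order, the minimum embedding. *)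

From mathcomp Require Import all_boot all_order all_fingroup.
Set Implicit Arguments. Unset Strict Implicit. Unset Printing Implicit Defensive.

(* Permutations: a permutation of size k is s : {perm 'I_k}; its point
   set is {(i, s i)}.  Points are identified with their abscissa i.   *)

Definition avoids321 k (s : {perm 'I_k}) : Prop :=
  ~ exists i j l : 'I_k, [/\ i < j, j < l, s j < s i & s l < s j].

Definition upper k (s : {perm 'I_k}) (i : 'I_k) : Prop :=
  exists j : 'I_k, i < j /\ s j < s i.
Definition lower k (s : {perm 'I_k}) (i : 'I_k) : Prop :=
  exists j : 'I_k, j < i /\ s i < s j.

Definition rigid k (s : {perm 'I_k}) : Prop :=
  forall i, upper s i \/ lower s i.

(* An embedding of pi into tau, as a map on points (abscissae):
   preserves the relative horizontal and vertical order of every pair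
   (injectivity follows). *)
Definition embedding k n (pi : {perm 'I_k}) (tau : {perm 'I_n})
  (f : 'I_k -> 'I_n) : Prop :=
  forall i j : 'I_k, (i < j) = (f i < f j) /\ (pi i < pi j) = (tau (f i) < tau (f j)).

Definition rigid_mapping k n (pi : {perm 'I_k}) (tau : {perm 'I_n})
  (f : 'I_k -> 'I_n) : Prop :=
  forall i, (upper pi i -> upper tau (f i)) /\ (lower pi i -> lower tau (f i)).

Definition le_pt n (tau : {perm 'I_n}) (x y : 'I_n) : Prop :=
  x = y \/ (x < y /\ tau x < tau y).

Definition le_map k n (tau : {perm 'I_n}) (f g : 'I_k -> 'I_n) : Prop :=
  forall i, le_pt tau (f i) (g i).

Definition min_embedding k n (pi : {perm 'I_k}) (tau : {perm 'I_n})
  (f : 'I_k -> 'I_n) : Prop :=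
  embedding pi tau f /\ rigid_mapping pi tau f /\
  forall g, embedding pi tau g -> rigid_mapping pi tau g -> le_map tau f g.

(* Computation model: a unit-cost RAM-style WHILE language over nat,
   with registers (indexed by nat) and arrays (indexed by nat), and
   only +, truncated -, comparisons as primitive operations.  Every
   executed command (and every loop test) costs one step.              *)

Inductive aexp : Type :=
  | AConst of nat
  | AVar of nat
  | AAdd of aexp & aexp
  | ASub of aexp & aexp
  | ARead of nat & aexp.

Inductive bexp : Type :=
  | BTrue
  | BLt of aexp & aexp
  | BEq of aexp & aexp
  | BNot of bexp
  | BAnd of bexp & bexp.

Inductive cmd : Type :=
  | CSkip
  | CAssign of nat & aexp
  | CWrite of nat & aexp & aexp
  | CSeq of cmd & cmd
  | CIf of bexp & cmd & cmd
  | CWhile of bexp & cmd.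

Record mstate := MState { regs : nat -> nat; arrs : nat -> nat -> nat }.

Fixpoint aeval (s : mstate) (e : aexp) : nat :=
  match e with
  | AConst c => c
  | AVar x => regs s x
  | AAdd a b => aeval s a + aeval s b
  | ASub a b => aeval s a - aeval s b
  | ARead arr a => arrs s arr (aeval s a)
  end.

Fixpoint beval (s : mstate) (b : bexp) : bool :=
  match b with
  | BTrue => true
  | BLt a c => aeval s a < aeval s c
  | BEq a c => aeval s a == aeval s c
  | BNot b => ~~ beval s b
  | BAnd b c => beval s b && beval s c
  end.

Definition set_reg (s : mstate) x v : mstate :=
  MState (fun y => if y == x then v else regs s y) (arrs s).
Definition set_mem (s : mstate) arr i v : mstate :=
  MState (regs s) (fun a j => if (a == arr) && (j == i) then v else arrs s a j).

Inductive exec : cmd -> mstate -> nat -> mstate -> Prop :=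
  | ESkip s : exec CSkip s 1 s
  | EAssign s x e : exec (CAssign x e) s 1 (set_reg s x (aeval s e))
  | EWrite s arr e v :
      exec (CWrite arr e v) s 1 (set_mem s arr (aeval s e) (aeval s v))
  | ESeq c1 c2 s t1 s1 t2 s2 :
      exec c1 s t1 s1 -> exec c2 s1 t2 s2 -> exec (CSeq c1 c2) s (t1 + t2) s2
  | EIfT b c1 c2 s t s' :
      beval s b = true -> exec c1 s t s' -> exec (CIf b c1 c2) s t.+1 s'
  | EIfF b c1 c2 s t s' :
      beval s b = false -> exec c2 s t s' -> exec (CIf b c1 c2) s t.+1 s'
  | EWhileF b c s : beval s b = false -> exec (CWhile b c) s 1 s
  | EWhileT b c s t1 s1 t2 s2 :
      beval s b = true -> exec c s t1 s1 -> exec (CWhile b c) s1 t2 s2 ->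
      exec (CWhile b c) s (t1 + t2).+1 s2.

(* Input encoding: register 0 = k, register 1 = n, array 0 holds pi
   (pi(i) at index i < k), array 1 holds tau; everything else is 0.   *)
Definition perm_nat k (s : {perm 'I_k}) (i : nat) : nat :=
  if insub i is Some j then val (s j) else 0.

Definition init_state k n (pi : {perm 'I_k}) (tau : {perm 'I_n}) : mstate :=
  MState (fun x => if x == 0 then k else if x == 1 then n else 0)
         (fun a i => if a == 0 then perm_nat pi i
                     else if a == 1 then perm_nat tau i else 0).

(* Output convention: register 2 = 1 signals success, with the
   embedding f stored in array 2 (f(i) at index i); register 2 = 0
   signals failure. *)

From mathcomp Require Import all_boot all_order all_fingroup.
From mathcomp Require Import zify.
Set Implicit Arguments. Unset Strict Implicit. Unset Printing Implicit Defensive.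

(* Since pi is rigid and tau avoids 321, an embedding sends the upper and the
   lower elements of pi into the upper and the lower elements of tau, and each
   of these two classes of tau is increasing.  Hence a map is an embedding as
   soon as it respects classes, x (b - 1) < x b, and tau (x a) < tau (x b) when
   pi a + 1 = pi b.  The algorithm keeps a candidate x b for every b, starting
   at 0, below the image of b under every embedding; if a constraint fails at
   b, all embeddings send b strictly above x b, so x b is incremented and the
   elements whose constraints involve x b are put back on a worklist.  There
   are at most k n increments, each costing constant time, and when the
   worklist empties x is an embedding, below all others pointwise and in the
   same increasing class, hence the minimum one. *)

(** * 321-avoiding permutations and their embeddings *)

Definition lowerb (f : nat -> nat) (i : nat) : bool :=
  has (fun j => f i < f j) (iota 0 i).

Lemma nat_of_bool_inj : injective nat_of_bool.
Proof. by do 2!case. Qed.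

Lemma lowerb_ext f g i : f =1 g -> lowerb f i = lowerb g i.
Proof. by move=> fg; apply: eq_has => j /=; rewrite !fg. Qed.

Lemma perm_natE k (s : {perm 'I_k}) (i : 'I_k) : perm_nat s i = s i.
Proof. by rewrite /perm_nat valK. Qed.

Lemma perm_nat_lt k (s : {perm 'I_k}) i : i < k -> perm_nat s i < k.
Proof. by move=> lt_ik; rewrite -[i]/(val (Ordinal lt_ik)) perm_natE. Qed.

Lemma perm_nat_inj k (s : {perm 'I_k}) i j :
  i < k -> j < k -> perm_nat s i = perm_nat s j -> i = j.
Proof.
move=> lt_ik lt_jk; rewrite -[i]/(val (Ordinal lt_ik)) -[j]/(val (Ordinal lt_jk)).
by rewrite !perm_natE => /val_inj/perm_inj/(congr1 val).
Qed.

Lemma ltn_mono_in_step k (g : nat -> nat) :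
  (forall i, i.+1 < k -> g i < g i.+1) -> {in gtn k &, {mono g : i j / i < j}}.
Proof.
move=> g_step; apply: leqW_mono_in; apply: leq_mono_in.
apply: (@homo_ltn_in nat (gtn k) g (fun a b => (a < b)%N)).
- exact: ltn_trans.
- by move=> i j _ lt_jk l /andP[_ lt_lj]; apply: ltn_trans lt_lj lt_jk.
- by move=> i _; apply: g_step.
Qed.

Lemma lowerP k (s : {perm 'I_k}) (i : 'I_k) : reflect (lower s i) (lowerb (perm_nat s) i).
Proof.
apply: (iffP hasP) => [[j]|[j [lt_ji sij]]].
- rewrite mem_iota add0n => /andP[_ lt_ji].
  have lt_jk : j < k by apply: ltn_trans lt_ji (ltn_ord i).
  by rewrite -[j]/(val (Ordinal lt_jk)) !perm_natE => ?; exists (Ordinal lt_jk).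
- by exists (val j); rewrite ?mem_iota //= !perm_natE.
Qed.

Section Avoid321.
Variables (n : nat) (t : {perm 'I_n}).
Hypothesis t321 : avoids321 t.
Local Notation lowt := (lowerb (perm_nat t)).

Lemma upper_not_lower i : upper t i -> ~ lower t i.
Proof. by move=> [j [? ?]] [l [? ?]]; apply: t321; exists l, i, j. Qed.

(* The upper elements, and likewise the lower elements, form an increasing
   sequence: a descent between two of them would extend to a 321. *)
Lemma same_class_lt (i j : 'I_n) : lowt i = lowt j -> i < j -> t i < t j.
Proof.
move=> eq_ij lt_ij; rewrite ltn_neqAle; apply/andP; split.
  by apply: contraTneq lt_ij => /val_inj/perm_inj->; rewrite ltnn.
rewrite leqNgt; apply/negP => lt_tji.
case: (boolP (lowt i)) eq_ij => [/lowerP[r [lt_ri tir]] _ | _].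
  by apply: t321; exists r, i, j.
by move=> /esym/negbT/lowerP; apply; exists i.
Qed.

Lemma same_class_le (i j : 'I_n) : lowt i = lowt j -> i <= j -> t i <= t j.
Proof.
move=> eq_ij; rewrite leq_eqVlt => /orP[/eqP/val_inj->//|lt_ij].
exact/ltnW/same_class_lt.
Qed.

End Avoid321.

Section Embedding.
Variables (k n : nat) (pi : {perm 'I_k}) (tau : {perm 'I_n}) (f : 'I_k -> 'I_n).
Hypothesis emb : embedding pi tau f.

Lemma embedding_upper i : upper pi i -> upper tau (f i).
Proof. by case=> j [? ?]; exists (f j); case: (emb i j) (emb j i) => <- _ [_ <-]. Qed.

Lemma embedding_lower i : lower pi i -> lower tau (f i).
Proof. by case=> j [? ?]; exists (f j); case: (emb j i) (emb i j) => <- _ [_ <-]. Qed.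

Lemma embedding_rigid_mapping : rigid_mapping pi tau f.
Proof. by move=> i; split; [apply: embedding_upper | apply: embedding_lower]. Qed.

Lemma embedding_inj : injective f.
Proof.
move=> i j fij; apply: val_inj; apply/eqP; rewrite eqn_leq leqNgt [j <= i]leqNgt.
by case: (emb i j) (emb j i) => -> _ [-> _]; rewrite fij ltnn.
Qed.

Lemma embedding_size : k <= n.
Proof. by have := leq_card f embedding_inj; rewrite !card_ord. Qed.

Lemma embedding_lowerb : rigid pi -> avoids321 tau ->
  forall i, lowerb (perm_nat tau) (f i) = lowerb (perm_nat pi) i.
Proof.
move=> rig tau321 i; apply/lowerP/lowerP => [lowfi | /embedding_lower//].
case: (rig i) => // /embedding_upper upfi.
by case: (upper_not_lower tau321 upfi lowfi).
Qed.

End Embedding.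

(** * Timed total correctness of commands *)

Definition exec_within c s (Q : mstate -> Prop) T :=
  exists t s', [/\ exec c s t s', t <= T & Q s'].

Section ExecWithin.
Implicit Types (c : cmd) (s : mstate) (Q : mstate -> Prop) (T : nat).

Lemma exec_within_weaken c s Q Q' T T' :
  exec_within c s Q T -> T <= T' -> (forall s', Q s' -> Q' s') -> exec_within c s Q' T'.
Proof.
by move=> [t [s' [ex le_tT Qs']]] le_TT' QQ'; exists t, s'; split; [|lia|apply: QQ'].
Qed.

Lemma exec_within_skip s Q T : Q s -> exec_within CSkip s Q T.+1.
Proof. by exists 1, s; split=> //; constructor. Qed.

Lemma exec_within_assign s x e Q T :
  Q (set_reg s x (aeval s e)) -> exec_within (CAssign x e) s Q T.+1.
Proof. by eexists; eexists; split; first constructor. Qed.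

Lemma exec_within_write s a e v Q T :
  Q (set_mem s a (aeval s e) (aeval s v)) -> exec_within (CWrite a e v) s Q T.+1.
Proof. by eexists; eexists; split; first constructor. Qed.

Lemma exec_within_seq c1 c2 s Q1 Q T1 T2 :
  exec_within c1 s Q1 T1 -> (forall s1, Q1 s1 -> exec_within c2 s1 Q T2) ->
  exec_within (CSeq c1 c2) s Q (T1 + T2).
Proof.
move=> [t1 [s1 [ex1 le1 Q1s1]]] /(_ s1 Q1s1) [t2 [s2 [ex2 le2 Qs2]]].
by exists (t1 + t2), s2; split; [econstructor; eauto | lia |].
Qed.

Lemma exec_within_seq_le c1 c2 s Q1 Q T1 T1' T2 :
  exec_within c1 s Q1 T1 -> T1 <= T1' ->
  (forall s1, Q1 s1 -> exec_within c2 s1 Q T2) ->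
  exec_within (CSeq c1 c2) s Q (T1' + T2).
Proof. by move=> ex1 le1; apply: exec_within_seq; apply: exec_within_weaken ex1 le1 _. Qed.

Lemma exec_within_if b c1 c2 s Q T :
  exec_within (if beval s b then c1 else c2) s Q T ->
  exec_within (CIf b c1 c2) s Q T.+1.
Proof.
case E: (beval s b) => -[t [s' [ex le_tT Qs']]]; exists t.+1, s'.
- by split=> //; apply: EIfT.
- by split=> //; apply: EIfF.
Qed.

Lemma exec_within_while b c (I : mstate -> Prop) (m : mstate -> nat) cb s :
  (forall s, I s -> beval s b -> exec_within c s (fun s' => I s' /\ m s' < m s) cb) ->
  I s -> exec_within (CWhile b c) s (fun s' => I s' /\ beval s' b = false) (m s * cb.+1 + 1).
Proof.
move=> body; have [N lt_mN] : exists N, m s < N by exists (m s).+1.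
elim: N s lt_mN => // N IH s lt_mN Is.
case E: (beval s b); last by exists 1, s; split=> //; [apply: EWhileF | lia].
have [t1 [s1 [ex1 le1 [Is1 lt_m]]]] := body s Is E.
have [t2 [s2 [ex2 le2 Qs2]]] := IH s1 (leq_trans lt_m lt_mN) Is1.
exists (t1 + t2).+1, s2; split=> //; first exact: EWhileT E ex1 ex2.
have: m s1 * cb.+1 + cb.+1 <= m s * cb.+1 by rewrite -mulSnr leq_mul2r lt_m orbT.
lia.
Qed.

Lemma exec_within_seq_step c1 c2 s s1 Q T :
  exec_within c1 s (eq^~ s1) 1 -> exec_within c2 s1 Q T -> exec_within (CSeq c1 c2) s Q T.+1.
Proof. by move=> ex1 ex2; apply: (exec_within_seq ex1) => ? ->. Qed.

Lemma exec_within_assign_seq x e c s Q T :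
  exec_within c (set_reg s x (aeval s e)) Q T ->
  exec_within (CSeq (CAssign x e) c) s Q T.+1.
Proof. by apply: exec_within_seq_step; apply: exec_within_assign. Qed.

Lemma exec_within_write_seq a e v c s Q T :
  exec_within c (set_mem s a (aeval s e) (aeval s v)) Q T ->
  exec_within (CSeq (CWrite a e v) c) s Q T.+1.
Proof. by apply: exec_within_seq_step; apply: exec_within_write. Qed.

Lemma exec_within_skip_seq c s Q T :
  exec_within c s Q T -> exec_within (CSeq CSkip c) s Q T.+1.
Proof. by apply: exec_within_seq_step; apply: exec_within_skip. Qed.

Lemma exec_within_if_seq b c1 c2 c s Q T :
  exec_within (CSeq (if beval s b then c1 else c2) c) s Q T ->
  exec_within (CSeq (CIf b c1 c2) c) s Q T.+1.
Proof.
case E: (beval s b) => -[t [s' [ex le_tT Qs']]];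
  inversion ex as [| | |? ? ? t1 s1 t2 ? ex1 ex2| | | |]; subst;
  exists (t1.+1 + t2), s'; split=> //; apply: ESeq ex2.
- exact: EIfT.
- exact: EIfF.
Qed.

Lemma exec_within_seqA c1 c2 c3 s Q T :
  exec_within (CSeq c1 (CSeq c2 c3)) s Q T -> exec_within (CSeq (CSeq c1 c2) c3) s Q T.
Proof.
move=> [t [s' [ex le_tT Qs']]].
inversion ex as [| | |? ? ? t1 s1 t23 ? ex1 ex23| | | |]; subst.
inversion ex23 as [| | |? ? ? t2 s2 t3 ? ex2 ex3| | | |]; subst.
by exists (t1 + t2 + t3), s'; split=> //; [exact: ESeq (ESeq ex1 ex2) ex3 | lia].
Qed.

End ExecWithin.

Lemma lowerb_max f i : lowerb f i = ((f i).+1 < \max_(0 <= j < i) (f j).+1).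
Proof.
rewrite /lowerb ltnNge -[has _ _]negbK -all_predC /index_iota subn0; congr negb.
apply/allP/bigmax_leqP_seq => [le_f j j_in _ | le_f j j_in /=].
  by move: (le_f j j_in); rewrite /= -leqNgt.
by rewrite -leqNgt -ltnS le_f.
Qed.

(* Register 4 holds the maximum of [(array src j).+1] over [j < regs 3]. *)
Definition lower_loop (src dst len : nat) : cmd :=
  CSeq (CAssign 3 (AConst 0)) (CSeq (CAssign 4 (AConst 0))
  (CWhile (BLt (AVar 3) (AVar len))
   (CSeq (CIf (BLt (AAdd (ARead src (AVar 3)) (AConst 1)) (AVar 4))
            (CWrite dst (AVar 3) (AConst 1)) (CWrite dst (AVar 3) (AConst 0)))
    (CSeq (CIf (BLt (AVar 4) (AAdd (ARead src (AVar 3)) (AConst 1)))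
            (CAssign 4 (AAdd (ARead src (AVar 3)) (AConst 1))) CSkip)
      (CAssign 3 (AAdd (AVar 3) (AConst 1))))))).

Lemma lower_loop_spec src dst len s : src <> dst -> len <> 3 -> len <> 4 ->
  exec_within (lower_loop src dst len) s (fun s' =>
   [/\ forall r, r <> 3 -> r <> 4 -> regs s' r = regs s r,
       forall a j, a <> dst -> arrs s' a j = arrs s a j &
       forall j, j < regs s len -> arrs s' dst j = lowerb (arrs s src) j])
   (regs s len * 6 + 3).
Proof.
move=> ne_src_dst ne_len3 ne_len4.
set N := regs s len; set f := arrs s src.
pose I s' := [/\ forall r, r <> 3 -> r <> 4 -> regs s' r = regs s r,
   forall a j, a <> dst -> arrs s' a j = arrs s a j,
   regs s' 3 <= N,
   regs s' 4 = \max_(0 <= j < regs s' 3) (f j).+1 &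
   forall j, j < regs s' 3 -> arrs s' dst j = lowerb f j].
have -> : N * 6 + 3 = (N * 6 + 1).+2 by lia.
do 2 apply: exec_within_assign_seq.
set s2 := set_reg _ 4 _.
have I2 : I s2.
  split=> //=; last by rewrite big_geq.
  by move=> r /eqP/negPf-> /eqP/negPf->.
apply: exec_within_weaken;
  first apply: (exec_within_while (I := I) (m := fun s' => N - regs s' 3) (cb := 5)) I2.
- move=> s' [regs' arrs' le_iN maxM low'] /=; rewrite (regs' len) // -/N => lt_iN.
  have src' j : arrs s' src j = f j by rewrite arrs'.
  set i := regs s' 3 in le_iN maxM low' lt_iN *; set M := regs s' 4 in maxM *.
  have step s5 : (forall r, r <> 3 -> r <> 4 -> regs s5 r = regs s' r) ->
     regs s5 3 = i.+1 -> regs s5 4 = maxn M (f i).+1 ->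
     (forall a j, arrs s5 a j =
        if (a == dst) && (j == i) then nat_of_bool (lowerb f i) else arrs s' a j) ->
     I s5 /\ N - regs s5 3 < N - regs s' 3.
    move=> regs5 i5 M5 arrs5; split; last by rewrite i5; lia.
    split; rewrite ?i5.
    + by move=> r ? ?; rewrite regs5 // regs'.
    + by move=> a j ne_a; rewrite arrs5 (introF eqP ne_a) arrs'.
    + exact: lt_iN.
    + by rewrite M5 maxM big_nat_recr.
    + move=> j; rewrite ltnS leq_eqVlt arrs5 eqxx /=.
      by case: eqP => [->|_ /= lt_ji] //; exact: low'.
  have lowi : lowerb f i = ((f i).+1 < M) by rewrite lowerb_max maxM.
  have src_dst : (src == dst) = false by apply/eqP.
  apply: exec_within_if_seq; case: ifP => /= low_test; apply: exec_within_write_seq;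
  apply: exec_within_if_seq; case: ifP => /= max_test;
  rewrite ?src_dst /= ?src' -/i -/M addn1 in low_test max_test;
  try apply: exec_within_assign_seq; try apply: exec_within_skip_seq;
  apply: exec_within_assign; apply: step => [r ne3 ne4| | |a j] /=;
  rewrite ?(introF eqP ne3) ?(introF eqP ne4) ?src_dst /= ?src' -/i -/M ?addn1 ?lowi ?low_test //;
  lia.
- by rewrite /s2 /= subn0.
- move=> s' [[regs' arrs' _ _ low'] /=]; rewrite (regs' len) // -/N => /negbT.
  rewrite -leqNgt => le_Ni.
  by split=> // j lt_jN; apply: low'; apply: leq_trans le_Ni.
Qed.

Definition fill_loop (a : nat) (e v : aexp) (len : nat) : cmd :=
  CSeq (CAssign 3 (AConst 0))
  (CWhile (BLt (AVar 3) (AVar len))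
     (CSeq (CWrite a e v) (CAssign 3 (AAdd (AVar 3) (AConst 1))))).

Lemma fill_loop_spec a e v len s (F G : nat -> nat) : len <> 3 ->
  {in gtn (regs s len) &, injective F} ->
  (forall s', (forall r, r <> 3 -> regs s' r = regs s r) ->
      (forall b j, b <> a -> arrs s' b j = arrs s b j) ->
      aeval s' e = F (regs s' 3) /\ aeval s' v = G (regs s' 3)) ->
  exec_within (fill_loop a e v len) s (fun s' =>
   [/\ forall r, r <> 3 -> regs s' r = regs s r,
       forall b j, b <> a -> arrs s' b j = arrs s b j &
       forall j, j < regs s len -> arrs s' a (F j) = G j])
   (regs s len * 3 + 2).
Proof.
move=> ne_len3 F_inj eval_ev.
set N := regs s len.
pose I s' := [/\ forall r, r <> 3 -> regs s' r = regs s r,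
   forall b j, b <> a -> arrs s' b j = arrs s b j,
   regs s' 3 <= N &
   forall j, j < regs s' 3 -> arrs s' a (F j) = G j].
have -> : N * 3 + 2 = (N * 3 + 1).+1 by lia.
apply: exec_within_assign_seq; set s2 := set_reg _ 3 _.
have I2 : I s2 by split=> // r /= /eqP/negPf->.
apply: exec_within_weaken;
  first apply: (exec_within_while (I := I) (m := fun s' => N - regs s' 3) (cb := 2)) I2.
- move=> s' [regs' arrs' le_iN filled] /=; rewrite (regs' len) // -/N => lt_iN.
  have [eval_e eval_v] := eval_ev s' regs' arrs'.
  apply: exec_within_write_seq; apply: exec_within_assign; rewrite /= eval_e eval_v.
  split; last by lia.
  split=> /=.
  + by move=> r ne3; rewrite (introF eqP ne3) regs'.
  + by move=> b j ne_ba; rewrite (introF eqP ne_ba) arrs'.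
  + by rewrite addn1.
  + move=> j; rewrite eqxx addn1 ltnS leq_eqVlt => /orP[/eqP->|lt_ji]; first by rewrite eqxx.
    case: eqP => [eq_F|_]; last exact: filled.
    by have := F_inj j (regs s' 3) (ltn_trans lt_ji lt_iN) lt_iN eq_F; lia.
- by rewrite /s2 /= subn0.
- move=> s' [[regs' arrs' _ filled] /=]; rewrite (regs' len) // -/N => /negbT.
  rewrite -leqNgt => le_Ni.
  by split=> // j lt_jN; apply: filled; apply: leq_trans le_Ni.
Qed.

(* Registers: 0 = k, 1 = n, 2 = output flag, 3 and 4 =
   scratch, 5 = worklist size, 6 = current element, 7 = failure flag.
   Arrays: 0 = pi, 1 = tau, 2 = candidate images x, 3 = [lowerb] of tau,
   5 = [lowerb] of pi, 6 = pi^-1, 7 = worklist. *)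

(* The element [b] of pi is violated if its candidate [x b] lies in the wrong
   class (upper/lower), is not to the right of [x (b - 1)], or lies below
   [x a] where [a] is the element of value [pi b - 1] and both candidates are
   in the right class. *)
Definition violation (A : nat -> nat -> nat) (b : nat) : bool :=
  let x := A 2 in
  let a := A 6 (A 0 b - 1) in
  [|| A 3 (x b) != A 5 b,
      (0 < b) && (x b < x (b - 1) + 1) |
      (0 < A 0 b) && [&& A 3 (x a) == A 5 a, A 3 (x b) == A 5 b & A 1 (x b) < A 1 (x a)]].

Section Candidates.
Variables (k n : nat) (pi : {perm 'I_k}) (tau : {perm 'I_n}).
Local Notation pn := (perm_nat pi).
Local Notation tn := (perm_nat tau).

Definition tables_ok (A : nat -> nat -> nat) : Prop :=
  [/\ A 0 =1 pn, A 1 =1 tn,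
      forall j, j < n -> A 3 j = lowerb tn j,
      forall i, i < k -> A 5 i = lowerb pn i &
      forall i, i < k -> A 6 (pn i) = i].

Definition cand_in_range (A : nat -> nat -> nat) := forall i, i < k -> A 2 i < n.

Definition cand_below (A : nat -> nat -> nat) :=
  forall f, embedding pi tau f -> forall i : 'I_k, A 2 i <= f i.

Definition cand_map (x : nat -> nat) (x_lt : forall i, i < k -> x i < n) : 'I_k -> 'I_n :=
  fun i => Ordinal (x_lt i (ltn_ord i)).

Lemma tables_ok_ext A A' :
  tables_ok A -> (forall a j, a <> 2 -> a <> 7 -> A' a j = A a j) -> tables_ok A'.
Proof.
case=> A0 A1 A3 A5 A6 eqA; split=> [i|i|j lt_jn|i lt_ik|i lt_ik]; rewrite eqA //.
- exact: A3.
- exact: A5.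
- exact: A6.
Qed.

Lemma inverse_table A v : tables_ok A -> v < k -> A 6 v < k /\ pn (A 6 v) = v.
Proof.
case=> _ _ _ _ A6 lt_vk; set i := (pi^-1)%g (Ordinal lt_vk).
have pn_i : pn i = v by rewrite perm_natE permKV.
by rewrite -pn_i A6.
Qed.

Lemma violation_local A A' b c :
  tables_ok A -> b < k -> c < k ->
  (forall a j, a <> 2 -> a <> 7 -> A' a j = A a j) ->
  (forall i, i <> b -> A' 2 i = A 2 i) ->
  c <> b -> c <> b.+1 -> ~ (pn b + 1 < k /\ c = A 6 (pn b + 1)) ->
  violation A' c = violation A c.
Proof.
move=> tabA lt_bk lt_ck eqA eqx ne_cb ne_cb1 ne_c_succ.
have [A0 _ _ _ A6] := tabA.
have eqA' a : a \in [:: 0; 1; 3; 5; 6] -> A' a =1 A a.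
  by rewrite !inE => a_in j; apply: eqA; apply/eqP; apply: contraTneq a_in => ->.
rewrite /violation !(eqA' 0) // !(eqA' 1) // !(eqA' 3) // !(eqA' 5) // !(eqA' 6) //.
rewrite eqx //; congr [|| _, _ | _].
- by case: (posnP c) => [->//|c_gt0]; rewrite (eqx (c - 1)) //; lia.
- case: (posnP (A 0 c)) => [->//|pnc_gt0]; rewrite A0 in pnc_gt0 *.
  have lt_v : pn c - 1 < k by have := perm_nat_lt pi lt_ck; lia.
  have [_ pn_a] := inverse_table tabA lt_v.
  rewrite (eqx (A 6 (pn c - 1))) // => eq_ab; apply: ne_c_succ.
  rewrite eq_ab in pn_a; split; first by have := perm_nat_lt pi lt_ck; lia.
  by rewrite pn_a subnK // A6.
Qed.

Section Violation.
Hypotheses (pi_rigid : rigid pi) (tau321 : avoids321 tau).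
Variable A : nat -> nat -> nat.
Hypotheses (tabA : tables_ok A) (xA : cand_in_range A).
Local Notation x := (A 2).

Lemma violation_below b (lt_bk : b < k) : cand_below A -> violation A b ->
  forall f, embedding pi tau f -> x b < f (Ordinal lt_bk).
Proof.
move=> below viol f emb; have [A0 A1 A3 A5 A6] := tabA.
set ob := Ordinal lt_bk; have xb_n : x b < n := xA lt_bk.
rewrite ltn_neqAle (below f emb ob) andbT; apply/negP => /eqP xb_fb.
case/or3P: viol.
- by rewrite A3 // A5 // xb_fb (embedding_lowerb emb pi_rigid tau321) eqxx.
- case/andP=> b_gt0 xb_le.
  have lt_b1k : b - 1 < k by lia.
  have := below f emb (Ordinal lt_b1k); have [+ _] := emb (Ordinal lt_b1k) ob.
  by rewrite /= -xb_fb; lia.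
- rewrite !A0 => /and4P[pnb_gt0 cls_a _ tau_lt].
  have lt_v : pn b - 1 < k by have := perm_nat_lt pi lt_bk; lia.
  have [lt_ak pn_a] := inverse_table tabA lt_v.
  set a := A 6 (pn b - 1) in lt_ak pn_a cls_a tau_lt.
  set oa := Ordinal lt_ak; have xa_n : x a < n := xA lt_ak.
  move: cls_a; rewrite A3 // A5 // -(embedding_lowerb emb pi_rigid tau321 oa) => /eqP.
  move=> /nat_of_bool_inj cls_a.
  have le_tau := same_class_le tau321 (i := Ordinal xa_n) (j := f oa) cls_a (below f emb oa).
  have lt_pi : pi oa < pi ob by rewrite -!perm_natE /= pn_a; lia.
  have [_ lt_tau] := emb oa ob; rewrite lt_tau in lt_pi.
  move: tau_lt; rewrite !A1 -[x b]/(val (Ordinal xb_n)) -[x a]/(val (Ordinal xa_n)).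
  rewrite !perm_natE (_ : Ordinal xb_n = f ob); first lia.
  exact: val_inj.
Qed.

Hypothesis no_viol : forall b, b < k -> ~~ violation A b.

Lemma no_violation_lowerb i : i < k -> lowerb tn (x i) = lowerb pn i.
Proof.
have [_ _ A3 A5 _] := tabA.
move=> lt_ik; have /norP[+ _] := no_viol lt_ik.
by rewrite negbK A3 ?xA // A5 // (inj_eq nat_of_bool_inj) => /eqP.
Qed.

Lemma no_violation_mono : {in gtn k &, {mono x : i j / i < j}}.
Proof.
apply: ltn_mono_in_step => i lt_i1k; have /norP[_ /norP[+ _]] := no_viol lt_i1k.
by rewrite /= subn1 /= addn1 ltnS -ltnNge.
Qed.

Lemma no_violation_inj : {in gtn k &, injective x}.
Proof.
move=> i j lt_ik lt_jk eq_x; case: (ltngtP i j) => // lt_ij.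
- by move: lt_ij; rewrite -(no_violation_mono lt_ik lt_jk) eq_x ltnn.
- by move: lt_ij; rewrite -(no_violation_mono lt_jk lt_ik) eq_x ltnn.
Qed.

Lemma no_violation_tau_mono :
  {in gtn k &, {mono (fun v => tn (x (A 6 v))) : v w / v < w}}.
Proof.
have [A0 A1 A3 A5 _] := tabA.
apply: ltn_mono_in_step => v lt_v1k.
have [lt_bk pn_b] := inverse_table tabA lt_v1k.
have [lt_ak pn_a] := inverse_table tabA (ltnW lt_v1k).
have /norP[_ /norP[_]] := no_viol lt_bk.
rewrite A0 pn_b /= subn1 /= A1 A1 !A3 ?xA // !A5 // !(inj_eq nat_of_bool_inj).
rewrite !no_violation_lowerb // !eqxx /= -leqNgt leq_eqVlt => /orP[|//].
move=> /eqP/(perm_nat_inj (xA lt_ak) (xA lt_bk))/no_violation_inj.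
by move=> /(_ lt_ak lt_bk) eq_ab; move: pn_a; rewrite eq_ab pn_b; lia.
Qed.

Lemma no_violation_embedding : embedding pi tau (cand_map xA).
Proof.
have [_ _ _ _ A6] := tabA.
move=> i j; split; first by rewrite /= (no_violation_mono (ltn_ord i) (ltn_ord j)).
have inv_pi l : A 6 (pi l) = l by rewrite -perm_natE A6.
rewrite -(no_violation_tau_mono (ltn_ord (pi i)) (ltn_ord (pi j))) /= !inv_pi.
by rewrite -[x i]/(val (cand_map xA i)) -[x j]/(val (cand_map xA j)) !perm_natE.
Qed.

Lemma no_violation_min_embedding : cand_below A -> min_embedding pi tau (cand_map xA).
Proof.
move=> below; have emb := no_violation_embedding.
split=> //; split=> [|g emb_g _ i]; first exact: embedding_rigid_mapping.
have := below g emb_g i; rewrite leq_eqVlt => /orP[/eqP x_g | lt_x_g].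
  by left; apply: val_inj.
right; split=> //; apply: same_class_lt => //=.
by rewrite no_violation_lowerb // (embedding_lowerb emb_g pi_rigid tau321).
Qed.

End Violation.
End Candidates.

Lemma sum_sub_incr k n (x x' : nat -> nat) b : b < k -> x b < n ->
  (forall i, i <> b -> x' i = x i) -> x' b = x b + 1 ->
  \sum_(i < k) (n - x' i) + 1 = \sum_(i < k) (n - x i).
Proof.
move=> lt_bk xb_n eqx x'b.
rewrite (bigD1 (Ordinal lt_bk)) //= [in RHS](bigD1 (Ordinal lt_bk)) //= x'b.
rewrite (eq_bigr (fun i : 'I_k => n - x i)); first lia.
by move=> i; rewrite -val_eqE /= => /eqP ne_ib; rewrite eqx.
Qed.

Lemma sum_sub_le k n (x : nat -> nat) : \sum_(i < k) (n - x i) <= k * n.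
Proof.
rewrite -[k in k * n]card_ord -sum_nat_const.
by apply: leq_sum => i _; apply: leq_subr.
Qed.

(** * The worklist algorithm *)

Definition push (e : aexp) : cmd :=
  CSeq (CWrite 7 (AVar 5) e) (CAssign 5 (AAdd (AVar 5) (AConst 1))).

Definition push_state s w := set_reg (set_mem s 7 (regs s 5) w) 5 (regs s 5 + 1).

Definition on_stack s w := exists2 j, j < regs s 5 & arrs s 7 j = w.

Section Stack.
Variable k : nat.

Definition stack_extends s s' :=
  [/\ forall r, r <> 5 -> regs s' r = regs s r,
      forall a j, a <> 7 -> arrs s' a j = arrs s a j,
      forall j, j < regs s 5 -> arrs s' 7 j = arrs s 7 j,
      regs s 5 <= regs s' 5 &
      forall j, j < regs s' 5 -> regs s 5 <= j -> arrs s' 7 j < k].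

Lemma stack_extends_refl s : stack_extends s s.
Proof. by split=> // j lt_j le_j; lia. Qed.

Lemma stack_extends_trans s1 s2 s3 :
  stack_extends s1 s2 -> stack_extends s2 s3 -> stack_extends s1 s3.
Proof.
move=> [R12 A12 S12 L12 N12] [R23 A23 S23 L23 N23]; split.
- by move=> r ne5; rewrite R23 // R12.
- by move=> a j ne7; rewrite A23 // A12.
- by move=> j lt_j; rewrite S23 ?S12 //; lia.
- exact: leq_trans L23.
- move=> j lt_j3 le_j1; case: (ltnP j (regs s2 5)) => lt_j2; last exact: N23.
  by rewrite S23 // N12.
Qed.

Lemma stack_extends_push s w : w < k -> stack_extends s (push_state s w).
Proof.
move=> lt_wk; split=> /=.
- by move=> r /eqP/negPf->.
- by move=> a j /eqP/negPf->.
- by move=> j lt_j; rewrite (_ : (j == regs s 5) = false) ?andbF //; apply/eqP; lia.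
- by rewrite addn1.
- by move=> j lt_j le_j; rewrite (_ : j == regs s 5) //; apply/eqP; lia.
Qed.

Definition pushed_if (c : bool) (w : nat) s s' :=
  [/\ stack_extends s s', regs s' 5 <= regs s 5 + c &
      c -> on_stack s' w].

Lemma on_stack_extends s s' w : stack_extends s s' -> on_stack s w -> on_stack s' w.
Proof. by case=> _ _ S L _ [j lt_j <-]; exists j; [apply: leq_trans L | rewrite S]. Qed.

Lemma pushed_if_push s w : w < k -> pushed_if true w s (push_state s w).
Proof.
move=> lt_wk; split; first exact: stack_extends_push.
- by rewrite /=.
- by exists (regs s 5); rewrite /= ?eqxx ?addn1.
Qed.

Lemma pushed_if_false w s : pushed_if false w s s.
Proof. by split; [apply: stack_extends_refl | rewrite addn0|]. Qed.

Lemma exec_within_push_seq e c s Q T :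
  exec_within c (push_state s (aeval s e)) Q T -> exec_within (CSeq (push e) c) s Q T.+2.
Proof.
by move=> ex; apply: exec_within_seqA; apply: exec_within_write_seq; apply: exec_within_assign_seq.
Qed.

Lemma exec_within_cpush c e s (Q : mstate -> Prop) T :
  (beval s c -> aeval s e < k) ->
  (forall s', pushed_if (beval s c) (aeval s e) s s' -> Q s') ->
  exec_within (CIf c (push e) CSkip) s Q T.+3.
Proof.
move=> lt_ek post; apply: exec_within_if; case: ifP => c_true.
- apply: exec_within_write_seq; apply: exec_within_assign.
  by apply: post; rewrite c_true; apply: pushed_if_push; apply: lt_ek.
- by apply: exec_within_skip; apply: post; rewrite c_true; apply: pushed_if_false.
Qed.

Lemma exec_within_cpush_seq c e c' s Q T :
  (beval s c -> aeval s e < k) ->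
  (forall s', pushed_if (beval s c) (aeval s e) s s' -> exec_within c' s' Q T) ->
  exec_within (CSeq (CIf c (push e) CSkip) c') s Q T.+3.
Proof.
move=> lt_ek post; rewrite -addn3 addnC.
apply: (exec_within_seq (Q1 := pushed_if (beval s c) (aeval s e) s)) => //.
exact: exec_within_cpush.
Qed.

End Stack.

Definition cand (e : aexp) : aexp := ARead 2 e.
Definition in_class (e : aexp) : bexp := BEq (ARead 3 (cand e)) (ARead 5 e).
Definition BOr (c c' : bexp) : bexp := BNot (BAnd (BNot c) (BNot c')).
Definition val_pred_elt : aexp := ARead 6 (ASub (ARead 0 (AVar 6)) (AConst 1)).

Definition violation_test : bexp :=
  BOr (BNot (in_class (AVar 6)))
  (BOr (BAnd (BLt (AConst 0) (AVar 6))
             (BLt (cand (AVar 6)) (AAdd (cand (ASub (AVar 6) (AConst 1))) (AConst 1))))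
       (BAnd (BLt (AConst 0) (ARead 0 (AVar 6)))
             (BAnd (in_class val_pred_elt)
             (BAnd (in_class (AVar 6))
                   (BLt (ARead 1 (cand (AVar 6))) (ARead 1 (cand val_pred_elt))))))).

Lemma beval_BOr s c c' : beval s (BOr c c') = beval s c || beval s c'.
Proof. by rewrite /= negb_and !negbK. Qed.

Lemma violation_testE s : beval s violation_test = violation (arrs s) (regs s 6).
Proof. by rewrite /violation_test !beval_BOr. Qed.

Definition push_neighbours : cmd :=
  CSeq (push (AVar 6))
  (CSeq (CIf (BLt (AAdd (AVar 6) (AConst 1)) (AVar 0)) (push (AAdd (AVar 6) (AConst 1))) CSkip)
        (CIf (BLt (AAdd (ARead 0 (AVar 6)) (AConst 1)) (AVar 0))
             (push (ARead 6 (AAdd (ARead 0 (AVar 6)) (AConst 1)))) CSkip)).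

Definition worklist_body : cmd :=
  CSeq (CAssign 5 (ASub (AVar 5) (AConst 1)))
  (CSeq (CAssign 6 (ARead 7 (AVar 5)))
  (CIf violation_test
     (CSeq (CWrite 2 (AVar 6) (AAdd (cand (AVar 6)) (AConst 1)))
        (CIf (BLt (cand (AVar 6)) (AVar 1)) push_neighbours (CAssign 7 (AConst 1))))
     CSkip)).

Definition worklist_test : bexp := BAnd (BLt (AConst 0) (AVar 5)) (BEq (AVar 7) (AConst 0)).

Section Worklist.
Variables (k n : nat) (pi : {perm 'I_k}) (tau : {perm 'I_n}).
Local Notation pn := (perm_nat pi).

Lemma push_neighbours_spec s : regs s 6 < k -> regs s 0 = k -> tables_ok pi tau (arrs s) ->
  exec_within push_neighbours s (fun s' =>
    [/\ stack_extends k s s', regs s' 5 <= regs s 5 + 3, on_stack s' (regs s 6),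
        (regs s 6).+1 < k -> on_stack s' (regs s 6).+1 &
        pn (regs s 6) + 1 < k -> on_stack s' (arrs s 6 (pn (regs s 6) + 1))]) 8.
Proof.
move=> lt_bk sK tabs; have [A0 _ _ _ _] := tabs.
set b := regs s 6; apply: exec_within_push_seq; set s3 := push_state _ _.
have ext3 : stack_extends k s s3 by apply: stack_extends_push.
apply: (exec_within_cpush_seq (k := k)) => /= [|s4 [ext4 sp4 on4]]; rewrite -/b ?sK //.
have [R4 A4 _ _ _] := ext4.
apply: (exec_within_cpush (k := k)) => /=; rewrite !R4 // !A4 //= -/b sK A0.
  by move=> lt_succ; have [] := inverse_table tabs lt_succ.
move=> s5 [ext5 sp5 on5]; have ext35 := stack_extends_trans ext4 ext5.
split.
- exact: stack_extends_trans ext3 ext35.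
- by move: sp4 sp5; rewrite /s3 /=; case: (_ < _); case: (_ < _) => /=; lia.
- apply: on_stack_extends ext35 _.
  by exists (regs s 5); rewrite /s3 /= ?eqxx ?addn1.
- by move=> lt_b1k; apply: on_stack_extends ext5 _; rewrite -addn1; apply: on4; rewrite sK addn1.
- exact: on5.
Qed.

Definition pop s := set_reg (set_reg s 5 (regs s 5 - 1)) 6 (arrs s 7 (regs s 5 - 1)).
Definition bump s := set_mem s 2 (regs s 6) (arrs s 2 (regs s 6) + 1).

Definition stack_in_range s := forall j, j < regs s 5 -> arrs s 7 j < k.
Definition covered s := forall b, b < k -> violation (arrs s) b -> on_stack s b.

Lemma covered_after_bump s s' (b := arrs s 7 (regs s 5 - 1)) :
  tables_ok pi tau (arrs s) -> covered s -> 0 < regs s 5 -> b < k ->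
  stack_extends k (bump (pop s)) s' -> on_stack s' b ->
  (b.+1 < k -> on_stack s' b.+1) -> (pn b + 1 < k -> on_stack s' (arrs s 6 (pn b + 1))) ->
  covered s'.
Proof.
move=> tabs cov sp_gt0 lt_bk [_ A' S' L' _] on_b on_b1 on_succ c lt_ck.
have [-> | ne_cb] := eqVneq c b; first by move=> _; apply: on_b.
have [eq_cb1 | ne_cb1] := eqVneq c b.+1.
  by move=> _; rewrite eq_cb1 in lt_ck *; apply: on_b1.
case: (boolP ((pn b + 1 < k) && (c == arrs s 6 (pn b + 1)))).
  by case/andP=> lt_succ /eqP-> _; apply: on_succ.
move=> not_succ.
rewrite (violation_local (A := arrs s) tabs lt_bk lt_ck) => [viol_c | a j ne2 ne7 | i ne_ib | | | ].
- have [j lt_j xj] := cov c lt_ck viol_c.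
  have lt_j1 : j < regs s 5 - 1.
    case: (ltnP j (regs s 5 - 1)) => // le_j; have j_top : j = regs s 5 - 1 by lia.
    by move: ne_cb; rewrite -xj j_top eqxx.
  by exists j; [exact: leq_trans L' | rewrite S'].
- by rewrite A' //= (introF eqP ne2).
- by rewrite A' //= (introF eqP ne_ib).
- exact/eqP.
- exact/eqP.
- by case=> lt_succ eq_c; move: not_succ; rewrite lt_succ eq_c eqxx.
Qed.

Hypotheses (pi_rigid : rigid pi) (tau321 : avoids321 tau).

Definition loop_inv s :=
  [/\ regs s 0 = k, regs s 1 = n, regs s 2 = 0, tables_ok pi tau (arrs s) &
      regs s 7 = 0 /\ [/\ cand_in_range k n (arrs s), cand_below pi tau (arrs s),
                          stack_in_range s & covered s]
      \/ regs s 7 = 1 /\ ~ exists f, embedding pi tau f].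

Definition slack s := \sum_(i < k) (n - arrs s 2 i).

(* An increment lowers [slack] by one and grows the worklist by at most two. *)
Definition loop_measure s := if regs s 7 == 0 then regs s 5 + 4 * slack s + 1 else 0.

Lemma loop_inv_bump s s' (b := arrs s 7 (regs s 5 - 1)) :
  loop_inv s -> regs s 7 = 0 -> 0 < regs s 5 -> violation (arrs s) b -> arrs s 2 b + 1 < n ->
  stack_extends k (bump (pop s)) s' -> regs s' 5 <= regs s 5 + 2 -> on_stack s' b ->
  (b.+1 < k -> on_stack s' b.+1) -> (pn b + 1 < k -> on_stack s' (arrs s 6 (pn b + 1))) ->
  loop_inv s' /\ loop_measure s' < loop_measure s.
Proof.
case=> sK sN s2 tabs [[_ [x_lt below st_k cov]] | [fail1 _]] fail0; last by rewrite fail1 in fail0.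
move=> sp_gt0 viol xb_n ext sp' on_b on_b1 on_succ.
have lt_bk : b < k by apply: st_k; lia.
have [R' A' S' L' N'] := ext.
have regs' r : r <> 5 -> r <> 6 -> regs s' r = regs s r.
  by move=> ne5 ne6; rewrite R' //= (introF eqP ne5) (introF eqP ne6).
have arrs' a j : a <> 2 -> a <> 7 -> arrs s' a j = arrs s a j.
  by move=> ne2 ne7; rewrite A' //= (introF eqP ne2).
have x' i : arrs s' 2 i = if i == b then arrs s 2 b + 1 else arrs s 2 i.
  by rewrite A' //=; case: eqP => // ->.
have fail0' : regs s' 7 = 0 by rewrite regs'.
have slack' : slack s' + 1 = slack s.
  apply: (sum_sub_incr lt_bk (x_lt _ lt_bk)); last by rewrite x' eqxx.
  by move=> i /eqP/negPf ne_ib; rewrite x' ne_ib.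
split; last first.
  by rewrite /loop_measure fail0 fail0' /=; lia.
split; rewrite ?regs' //; first exact: tables_ok_ext tabs arrs'.
left; split=> //; split.
- by move=> i lt_ik; rewrite x'; case: eqP => // _; apply: x_lt.
- move=> f emb i; rewrite x'; case: eqP => [eq_ib|_]; last exact: below f emb i.
  have -> : i = Ordinal lt_bk by apply/val_inj => /=; exact: eq_ib.
  by rewrite addn1; apply: (violation_below pi_rigid tau321 tabs x_lt lt_bk below viol).
- move=> j lt_j; case: (ltnP j (regs s 5 - 1)) => [lt_j1|le_j1]; last exact: N'.
  by rewrite S' //= st_k //; lia.
- exact: covered_after_bump ext on_b on_b1 on_succ.
Qed.

Lemma worklist_body_spec s : loop_inv s -> beval s worklist_test ->
  exec_within worklist_body s (fun s' => loop_inv s' /\ loop_measure s' < loop_measure s) 13.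
Proof.
move=> inv_s /andP[/= sp_gt0 /eqP fail0].
have [sK sN s2 tabs [[_ [x_lt below st_k cov]] | [fail1 _]]] := inv_s; last first.
  by rewrite fail1 in fail0.
set b := arrs s 7 (regs s 5 - 1).
have lt_bk : b < k by apply: st_k; lia.
do 2 apply: exec_within_assign_seq; rewrite -[set_reg _ 6 _]/(pop s).
apply: exec_within_if; rewrite violation_testE /=; case: ifP => viol.
- apply: exec_within_write_seq; rewrite -[set_mem _ 2 _ _]/(bump (pop s)).
  have tabs' : tables_ok pi tau (arrs (bump (pop s))).
    by apply: (tables_ok_ext tabs) => a j ne2 _; rewrite /= (introF eqP ne2).
  apply: exec_within_if => /=; rewrite sN eqxx -/b; case: ifP => xb_n.
  + apply: exec_within_weaken (push_neighbours_spec _ _ tabs') _ _ => //=.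
    move=> s' [ext sp' on_b on_b1 on_succ].
    by apply: (loop_inv_bump inv_s fail0 sp_gt0 viol xb_n ext) => //; lia.
  + apply: exec_within_assign; split; last by rewrite /loop_measure fail0 /= addn1.
    split=> //; right; split=> // -[f emb].
    have := violation_below pi_rigid tau321 tabs x_lt lt_bk below viol emb.
    by move/negbT: xb_n; rewrite -leqNgt; have := ltn_ord (f (Ordinal lt_bk)); lia.
- apply: exec_within_skip; split; last first.
    by rewrite /loop_measure /= fail0 -[slack _]/(slack s) /=; lia.
  split=> //; left; split=> //; split=> //.
  + by move=> j /= lt_j; apply: st_k; lia.
  + move=> c lt_ck viol_c; have [j lt_j xj] := cov c lt_ck viol_c; exists j => //=.
    case: (ltnP j (regs s 5 - 1)) => // le_j.
    have j_top : j = regs s 5 - 1 by lia.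
    by move: viol; rewrite -j_top xj viol_c.
Qed.

End Worklist.

Definition prepare : cmd :=
  CSeq (lower_loop 1 3 1) (CSeq (lower_loop 0 5 0)
  (CSeq (fill_loop 6 (ARead 0 (AVar 3)) (AVar 3) 0)
  (CSeq (fill_loop 7 (AVar 3) (AVar 3) 0) (CAssign 5 (AVar 0))))).

Definition worklist_loop : cmd := CWhile worklist_test worklist_body.

Definition report : cmd := CIf (BEq (AVar 7) (AConst 0)) (CAssign 2 (AConst 1)) CSkip.

Definition embed_prog : cmd :=
  CIf (BEq (AVar 0) (AConst 0)) (CAssign 2 (AConst 1))
  (CIf (BLt (AVar 1) (AVar 0)) CSkip (CSeq prepare (CSeq worklist_loop report))).

Definition reports_embedding k n (pi : {perm 'I_k}) (tau : {perm 'I_n}) s :=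
  ((exists f, embedding pi tau f) ->
     regs s 2 = 1 /\
     exists f, min_embedding pi tau f /\ forall i : 'I_k, arrs s 2 i = val (f i)) /\
  (~ (exists f, embedding pi tau f) -> regs s 2 = 0).

Section Program.
Variables (k n : nat) (pi : {perm 'I_k}) (tau : {perm 'I_n}).
Hypotheses (pi_rigid : rigid pi) (tau321 : avoids321 tau).

Lemma prepare_spec : 0 < k -> k <= n ->
  exec_within prepare (init_state pi tau)
    (fun s => loop_inv pi tau s /\ loop_measure k n s <= k + 4 * (k * n) + 1)
    ((n * 6 + 3) + ((k * 6 + 3) + ((k * 3 + 2) + ((k * 3 + 2) + 1)))).
Proof.
move=> k_gt0 le_kn; set s0 := init_state pi tau.
apply: (exec_within_seq_le (lower_loop_spec (src := 1) (dst := 3) (len := 1) s0 _ _ _)) => //.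
move=> s1 [R1 A1 L1].
apply: (exec_within_seq_le (lower_loop_spec (src := 0) (dst := 5) (len := 0) s1 _ _ _)) => //.
  by rewrite R1.
move=> s2 [R2 A2 L2].
have regs2 r : r <> 3 -> r <> 4 -> regs s2 r = regs s0 r by move=> ne3 ne4; rewrite R2 // R1.
have arrs2 a j : a <> 3 -> a <> 5 -> arrs s2 a j = arrs s0 a j by move=> ne3 ne5; rewrite A2 // A1.
have tab3 j : j < n -> arrs s2 3 j = lowerb (perm_nat tau) j by move=> lt_jn; rewrite A2 // L1.
have tab5 i : i < k -> arrs s2 5 i = lowerb (perm_nat pi) i.
  move=> lt_ik; rewrite L2 ?R1 //; congr (nat_of_bool _).
  by apply: lowerb_ext => j; rewrite A1.
have k2 : regs s2 0 = k by rewrite regs2.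
apply: (exec_within_seq_le (fill_loop_spec (a := 6) (e := ARead 0 (AVar 3)) (v := AVar 3)
   (len := 0) (s := s2) (F := perm_nat pi) (G := id) _ _ _)) => //.
- by rewrite k2 => i j; apply: perm_nat_inj.
- by move=> s' _ A'; rewrite /= A' // arrs2.
- by rewrite k2.
move=> s3 [R3 A3 L3].
apply: (exec_within_seq_le (fill_loop_spec (a := 7) (e := AVar 3) (v := AVar 3) (len := 0)
   (s := s3) (F := id) (G := id) _ _ _)) => //.
- by rewrite R3 // k2.
move=> s4 [R4 A4 L4]; apply: exec_within_assign; set s5 := set_reg s4 5 _.
have k3 : regs s3 0 = k by rewrite R3.
have regs5 r : r <> 3 -> r <> 4 -> r <> 5 -> regs s5 r = regs s0 r.
  by move=> ne3 ne4 ne5; rewrite /s5 /= (introF eqP ne5) R4 // R3 // regs2.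
have sp5 : regs s5 5 = k by rewrite /s5 /= R4 // k3.
have arrs5 a j : a <> 6 -> a <> 7 -> arrs s5 a j = arrs s2 a j.
  by move=> ne6 ne7; rewrite /s5 /= A4 // A3.
have stack5 j : j < k -> arrs s5 7 j = j by move=> lt_jk; rewrite /s5 /= L4 // k3.
split; last first.
  rewrite /loop_measure regs5 // sp5 /=; have := sum_sub_le k n (arrs s5 2).
  by rewrite /slack; lia.
split; rewrite ?regs5 //; first split.
- by move=> i; rewrite arrs5 // arrs2.
- by move=> i; rewrite arrs5 // arrs2.
- by move=> j lt_jn; rewrite arrs5 // tab3.
- by move=> i lt_ik; rewrite arrs5 // tab5.
- by move=> i lt_ik; rewrite /s5 /= A4 // L3 // k2.
left; split=> //; split.
- by move=> i lt_ik; rewrite arrs5 // arrs2 //=; lia.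
- by move=> f _ i; rewrite arrs5 // arrs2.
- by move=> j; rewrite sp5 => lt_jk; rewrite stack5.
- by move=> b lt_bk _; exists b; rewrite ?sp5 ?stack5.
Qed.

Lemma report_spec s : loop_inv pi tau s -> beval s worklist_test = false ->
  exec_within report s (reports_embedding pi tau) 2.
Proof.
case=> _ _ s2 tabs [[fail0 [x_lt below st_k cov]] | [fail1 no_emb]] stop.
- apply: exec_within_if; rewrite /= fail0 /=; apply: exec_within_assign.
  move: stop; rewrite /= fail0 eqxx andbT => /negbT; rewrite -leqNgt leqn0 => /eqP sp0.
  have no_viol b : b < k -> ~~ violation (arrs s) b.
    by move=> lt_bk; apply/negP => /(cov b lt_bk) [j]; rewrite sp0.
  have min := no_violation_min_embedding pi_rigid tau321 tabs x_lt no_viol below.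
  by split=> [_ | []]; [split=> //; exists (cand_map x_lt) | exists (cand_map x_lt); case: min].
- apply: exec_within_if; rewrite /= fail1 /=; apply: exec_within_skip.
  by split=> // emb; case: no_emb.
Qed.

End Program.

Lemma empty_min_embedding n (pi : {perm 'I_0}) (tau : {perm 'I_n}) (f : 'I_0 -> 'I_n) :
  min_embedding pi tau f.
Proof. by split; [|split] => [[]|[]|g _ _ []]. Qed.

Theorem proposition2 :
  exists (P : cmd) (C : nat),
  forall (k n : nat) (pi : {perm 'I_k}) (tau : {perm 'I_n}),
    avoids321 pi -> rigid pi -> avoids321 tau ->
    exists (t : nat) (s' : mstate),
      [/\ exec P (init_state pi tau) t s',
          t <= C * (k * n) + C &
          ((exists f, embedding pi tau f) ->
             regs s' 2 = 1 /\
             exists f, min_embedding pi tau f /\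
                       forall i : 'I_k, arrs s' 2 i = val (f i)) /\
          (~ (exists f, embedding pi tau f) -> regs s' 2 = 0)].
Proof.
exists embed_prog, 100 => k n pi tau _ pi_rigid tau321.
suff [t [s' [ex le_t out]]] : exec_within embed_prog (init_state pi tau)
  (reports_embedding pi tau) (100 * (k * n) + 99).+1 by exists t, s'; split=> //; lia.
apply: exec_within_if => /=; case: posnP => [k0 | k_gt0].
  subst k; apply: exec_within_assign; have f : 'I_0 -> 'I_n by case.
  split=> [_ | no_emb]; last by case: no_emb; exists f; case.
  by split=> //; exists f; split; [exact: empty_min_embedding | case].
rewrite addnS; apply: exec_within_if => /=; case: ltnP => [lt_nk | le_kn].
  rewrite addnS; apply: exec_within_skip; split=> // -[f /embedding_size le_kn].
  by move: lt_nk; rewrite ltnNge le_kn.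
have le_n : n <= k * n by rewrite leq_pmull.
have le_k : k <= k * n by rewrite leq_pmulr //; lia.
set T_prep := (n * 6 + 3) + ((k * 6 + 3) + ((k * 3 + 2) + ((k * 3 + 2) + 1))).
set T_loop := (k + 4 * (k * n) + 1) * 14 + 1.
suff run : exec_within (CSeq prepare (CSeq worklist_loop report)) (init_state pi tau)
                       (reports_embedding pi tau) (T_prep + (T_loop + 2)).
  by apply: exec_within_weaken run _ _ => //; rewrite /T_prep /T_loop; lia.
apply: (exec_within_seq (prepare_spec pi tau k_gt0 le_kn)) => s [inv_s measure_s].
apply: exec_within_seq_le (exec_within_while (worklist_body_spec pi_rigid tau321) inv_s) _ _.
  by apply: leq_add => //; apply: leq_mul.
by move=> s' [inv_s' stop]; apply: report_spec.
Qed.
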